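(* For every slat-doctrine $P:\mathcal{C}^{\mathrm{op}}\to\mathbf{Pos}$, its universal completion $P^{un}$ is a universal slat-doctrine.
   Context: A slat-doctrine is a functor $P:\mathcal{C}^{\mathrm{op}}\to\mathbf{Pos}$ with $\mathcal{C}$ having finite products; $P_f:P(Y)\to P(X)$ is reindexing along $f:X\to Y$. It is universal if for all $A_1,A_2$ and $i=1,2$ the map $P_{\mathrm{pr}_i}:P(A_i)\to P(A_1\times A_2)$ has a right adjoint $\forall_{\mathrm{pr}_i}$ and these satisfy Beck–Chevalley: for every pullback of a projection $\mathrm{pr}:X\to A$ along $f:A'\to A$, with resulting projection $\mathrm{pr}':X'\to A'$ and $f':X'\to X$, $\forall_{\mathrm{pr}'}P_{f'}=P_f\forall_{\mathrm{pr}}$. Universal completion: $P^{un}(A)$ is the poset (reflection of the preorder) of triples $(A,B,\alpha)$ with $B$ an object of $\mathcal{C}$ and $\alpha\in P(A\times B)$, where $(A,B,\alpha)\le(A,C,\beta)$ iff there is an arrow $g:A\times C\to B$ with $P_{\langle\mathrm{pr}_A,g\rangle}(\alpha)\le\beta$; for $f:A\to C$, $P^{un}_f(C,D,\gamma)=(A,D,P_{f\times 1_D}(\gamma))$. *)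

From Stdlib Require Import ClassicalEpsilon.

Record Cat : Type := MkCat {
  ob : Type;
  hom : ob -> ob -> Type;
  idm : forall A : ob, hom A A;
  (* comp A B C g f  =  g o f  : A -> C *)
  comp : forall A B C : ob, hom B C -> hom A B -> hom A C;
  comp_idl : forall A B (f : hom A B), comp A B B (idm B) f = f;
  comp_idr : forall A B (f : hom A B), comp A A B f (idm A) = f;
  comp_assoc : forall A B C D (f : hom A B) (g : hom B C) (h : hom C D),
      comp A C D h (comp A B C g f) = comp A B D (comp B C D h g) f
}.

Arguments idm {c} A.
Arguments comp {c A B C} g f.

Record FPCat : Type := MkFPCat {
  cat :> Cat;
  term : ob cat;
  bang : forall A : ob cat, hom cat A term;
  bang_uniq : forall A (f : hom cat A term), f = bang A;
  prod : ob cat -> ob cat -> ob cat;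
  pr1 : forall A B, hom cat (prod A B) A;
  pr2 : forall A B, hom cat (prod A B) B;
  pair : forall X A B, hom cat X A -> hom cat X B -> hom cat X (prod A B);
  pair_pr1 : forall X A B (f : hom cat X A) (g : hom cat X B),
      comp (pr1 A B) (pair X A B f g) = f;
  pair_pr2 : forall X A B (f : hom cat X A) (g : hom cat X B),
      comp (pr2 A B) (pair X A B f g) = g;
  pair_uniq : forall X A B (h : hom cat X (prod A B)),
      h = pair X A B (comp (pr1 A B) h) (comp (pr2 A B) h)
}.

Arguments term {f0}.
Arguments prod {f0} _ _.
Arguments pr1 {f0} A B.
Arguments pr2 {f0} A B.
Arguments pair {f0 X A B} _ _.

Definition fprod (C : FPCat) (A A' B B' : ob C) (f : hom C A A') (g : hom C B B')
  : hom C (prod A B) (prod A' B') :=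
  pair (comp f (pr1 A B)) (comp g (pr2 A B)).
Arguments fprod {C A A' B B'} f g.

Record DocData (C : FPCat) : Type := MkDocData {
  fib : ob C -> Type;
  fle : forall A : ob C, fib A -> fib A -> Prop;
  reidx : forall A B : ob C, hom C A B -> fib B -> fib A
}.
Arguments fib {C} d A.
Arguments fle {C} d {A} _ _.
Arguments reidx {C} d {A B} f _.

Definition is_doctrine (C : FPCat) (P : DocData C) : Prop :=
  (forall A (x : fib P A), fle P x x) /\
  (forall A (x y z : fib P A), fle P x y -> fle P y z -> fle P x z) /\
  (forall A (x y : fib P A), fle P x y -> fle P y x -> x = y) /\
  (forall A B (f : hom C A B) (x y : fib P B), fle P x y -> fle P (reidx P f x) (reidx P f y)) /\
  (forall A (x : fib P A), reidx P (idm A) x = x) /\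
  (forall A B D (f : hom C A B) (g : hom C B D) (x : fib P D),
      reidx P (comp g f) x = reidx P f (reidx P g x)).

Definition slat_doctrine (C : FPCat) (P : DocData C) : Prop := is_doctrine C P.

(* Universal slat-doctrine: P_{pr_i} has a right adjoint forall_{pr_i} for all A1, A2,
   i = 1,2, satisfying Beck-Chevalley along the pullback of pr_i along f, i.e.
     pr1 : A x B -> A  pulled back along f : A' -> A  is  pr1 : A' x B -> A'  with f' = f x 1_B,
     pr2 : B x A -> A  pulled back along f : A' -> A  is  pr2 : B x A' -> A'  with f' = 1_B x f. *)
Definition is_universal (C : FPCat) (P : DocData C) : Prop :=
  slat_doctrine C P /\
  exists (all1 : forall A1 A2 : ob C, fib P (prod A1 A2) -> fib P A1)
         (all2 : forall A1 A2 : ob C, fib P (prod A1 A2) -> fib P A2),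
    (forall A1 A2 (a : fib P A1) (b : fib P (prod A1 A2)),
        fle P (reidx P (pr1 A1 A2) a) b <-> fle P a (all1 A1 A2 b)) /\
    (forall A1 A2 (a : fib P A2) (b : fib P (prod A1 A2)),
        fle P (reidx P (pr2 A1 A2) a) b <-> fle P a (all2 A1 A2 b)) /\
    (forall A A' B (f : hom C A' A) (b : fib P (prod A B)),
        all1 A' B (reidx P (fprod f (idm B)) b) = reidx P f (all1 A B b)) /\
    (forall A A' B (f : hom C A' A) (b : fib P (prod B A)),
        all2 B A' (reidx P (fprod (idm B) f) b) = reidx P f (all2 B A b)).

Definition equivr {X : Type} (le : X -> X -> Prop) (x : X) : X -> Prop :=
  fun y => le x y /\ le y x.

Definition refl_ty (X : Type) (le : X -> X -> Prop) : Type :=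
  { S : X -> Prop | exists x, S = equivr le x }.

Definition cls {X : Type} (le : X -> X -> Prop) (x : X) : refl_ty X le :=
  exist _ (equivr le x) (ex_intro _ x eq_refl).

Definition rep {X : Type} {le : X -> X -> Prop} (S : refl_ty X le) : X :=
  proj1_sig (constructive_indefinite_description _ (proj2_sig S)).

Definition refl_le {X : Type} (le : X -> X -> Prop) (S T : refl_ty X le) : Prop :=
  le (rep S) (rep T).

Definition refl_map {X Y : Type} (leX : X -> X -> Prop) (leY : Y -> Y -> Prop)
  (h : X -> Y) (S : refl_ty X leX) : refl_ty Y leY :=
  cls leY (h (rep S)).

Section Un.
Variables (C : FPCat) (P : DocData C).

Definition tri (A : ob C) : Type := { B : ob C & fib P (prod A B) }.

Definition tri_le (A : ob C) (t u : tri A) : Prop :=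
  exists g : hom C (prod A (projT1 u)) (projT1 t),
    fle P (reidx P (pair (pr1 A (projT1 u)) g) (projT2 t)) (projT2 u).

Definition tri_reidx (A A' : ob C) (f : hom C A A') (t : tri A') : tri A :=
  existT _ (projT1 t) (reidx P (fprod f (idm (projT1 t))) (projT2 t)).

Definition Pun : DocData C :=
  MkDocData C
    (fun A => refl_ty (tri A) (tri_le A))
    (fun A => refl_le (tri_le A))
    (fun A A' f => refl_map (tri_le A') (tri_le A) (tri_reidx A A' f)).
End Un.
Arguments Pun {C} P.

From Stdlib Require Import ClassicalEpsilon FunctionalExtensionality PropExtensionality ProofIrrelevance.
From Stdlib Require Import RelationClasses Morphisms.

(* P^un is the poset reflection of the preorder of triples (A, B, α), and poset reflection is
   functorial on monotone maps: it preserves identities, composites, commuting squares and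
   Galois connections. So every axiom can be checked on triples, up to the preorder.
   Present a projection p : X → A as p ∘ σ = pr1 with σ : A × Y → X split epi (σ = id for
   pr1 and σ = swap for pr2). Then the right adjoint of P^un_p sends (B, β) to
   (Y × B, β reindexed along A × (Y × B) ≅ (A × Y) × B → X × B); a witness g of
   P^un_p(D, δ) ≤ (B, β) precomposed with that map is a witness of the transposed inequality,
   and conversely via the splitting of σ. Beck–Chevalley holds on the nose, since both sides
   reindex β along the same morphism. *)

Section Reflection.
Context {X : Type} {leX : X -> X -> Prop} (preX : PreOrder leX).

Lemma rep_cls (x : X) : leX (rep (cls leX x)) x /\ leX x (rep (cls leX x)).
Proof.
  assert (Hx : equivr leX x x) by (split; reflexivity).
  unfold rep; destruct constructive_indefinite_description as [r Hr]; simpl in *.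
  rewrite Hr in Hx; exact Hx.
Qed.

Lemma le_rep_clsl (x y : X) : leX (rep (cls leX x)) y <-> leX x y.
Proof.
  destruct (rep_cls x) as [Hrx Hxr].
  split; intros Hle; etransitivity; eassumption.
Qed.

Lemma le_rep_clsr (x y : X) : leX y (rep (cls leX x)) <-> leX y x.
Proof.
  destruct (rep_cls x) as [Hrx Hxr].
  split; intros Hle; etransitivity; eassumption.
Qed.

Lemma cls_eq (x y : X) : leX x y -> leX y x -> cls leX x = cls leX y.
Proof.
  intros Hxy Hyx; apply subset_eq_compat.
  extensionality z; apply propositional_extensionality.
  unfold equivr; split; intros [Hl Hr]; split; etransitivity; eassumption.
Qed.

Lemma cls_rep (S : refl_ty X leX) : cls leX (rep S) = S.
Proof.
  destruct S as [S HS]; apply subset_eq_compat; unfold rep; simpl.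
  destruct constructive_indefinite_description as [r Hr]; simpl.
  symmetry; exact Hr.
Qed.

Lemma refl_le_cls (x y : X) : refl_le leX (cls leX x) (cls leX y) <-> leX x y.
Proof. unfold refl_le; rewrite le_rep_clsl, le_rep_clsr; reflexivity. Qed.

Lemma refl_le_preorder : PreOrder (refl_le leX).
Proof.
  split; unfold refl_le.
  - intros S; reflexivity.
  - intros S T U; apply transitivity.
Qed.

Lemma refl_le_antisym (S T : refl_ty X leX) : refl_le leX S T -> refl_le leX T S -> S = T.
Proof. intros HST HTS; rewrite <- (cls_rep S), <- (cls_rep T); apply cls_eq; assumption. Qed.

End Reflection.

Section ReflectionMaps.
Context {X Y Z : Type} {leX : X -> X -> Prop} {leY : Y -> Y -> Prop} {leZ : Z -> Z -> Prop}.
Context (preX : PreOrder leX) (preY : PreOrder leY) (preZ : PreOrder leZ).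

Lemma refl_map_mono (h : X -> Y) : Proper (leX ==> leY) h ->
  Proper (refl_le leX ==> refl_le leY) (refl_map leX leY h).
Proof.
  intros h_mono S T HST; unfold refl_map.
  rewrite refl_le_cls by exact preY; apply h_mono, HST.
Qed.

Lemma refl_map_id (h : X -> X) : (forall x, h x = x) -> forall S, refl_map leX leX h S = S.
Proof. intros h_id S; unfold refl_map; rewrite h_id; apply cls_rep. Qed.

Lemma refl_map_comp (h : X -> Y) (g : Y -> Z) (k : X -> Z) :
  Proper (leY ==> leZ) g -> (forall x, k x = g (h x)) ->
  forall S, refl_map leX leZ k S = refl_map leY leZ g (refl_map leX leY h S).
Proof.
  intros g_mono Hk S; unfold refl_map at 1 2 3; rewrite Hk.
  destruct (rep_cls preY (h (rep S))) as [Hrx Hxr].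
  apply cls_eq; [exact preZ | apply g_mono; assumption ..].
Qed.

Lemma refl_map_adjoint (h : X -> Y) (k : Y -> X) :
  (forall x y, leY (h x) y <-> leX x (k y)) ->
  forall S T, refl_le leY (refl_map leX leY h S) T <-> refl_le leX S (refl_map leY leX k T).
Proof.
  intros hk S T; unfold refl_le, refl_map.
  rewrite le_rep_clsl, le_rep_clsr by assumption; apply hk.
Qed.

End ReflectionMaps.

Lemma refl_map_square {X Y Z W : Type}
  {leX : X -> X -> Prop} {leY : Y -> Y -> Prop} {leZ : Z -> Z -> Prop} {leW : W -> W -> Prop}
  (preY : PreOrder leY) (preZ : PreOrder leZ) (preW : PreOrder leW)
  (h : X -> Y) (k : Y -> W) (h' : X -> Z) (k' : Z -> W) :
  Proper (leY ==> leW) k -> Proper (leZ ==> leW) k' -> (forall x, k (h x) = k' (h' x)) ->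
  forall S, refl_map leY leW k (refl_map leX leY h S) = refl_map leZ leW k' (refl_map leX leZ h' S).
Proof.
  intros k_mono k'_mono Hsq S.
  rewrite <- (refl_map_comp preY preW h k (fun x => k (h x))),
          <- (refl_map_comp preZ preW h' k' (fun x => k (h x))); auto.
Qed.

Section ProductMorphisms.
Variable C : FPCat.

Lemma prod_hom_ext (W A B : ob C) (h k : hom C W (prod A B)) :
  comp (pr1 A B) h = comp (pr1 A B) k -> comp (pr2 A B) h = comp (pr2 A B) k -> h = k.
Proof. intros H1 H2; rewrite (pair_uniq _ _ _ _ h), (pair_uniq _ _ _ _ k), H1, H2; reflexivity. Qed.

Lemma pair_comp (V W A B : ob C) (f : hom C W A) (g : hom C W B) (k : hom C V W) :
  comp (pair f g) k = pair (comp f k) (comp g k).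
Proof. apply prod_hom_ext; rewrite !comp_assoc, ?pair_pr1, ?pair_pr2; reflexivity. Qed.

Lemma pair_pr (A B : ob C) : pair (pr1 A B) (pr2 A B) = idm (prod A B).
Proof. apply prod_hom_ext; rewrite ?pair_pr1, ?pair_pr2, comp_idr; reflexivity. Qed.

Definition prod_assoc (A Y B : ob C) : hom C (prod A (prod Y B)) (prod (prod A Y) B) :=
  pair (pair (pr1 _ _) (comp (pr1 _ _) (pr2 _ _))) (comp (pr2 _ _) (pr2 _ _)).

Definition prod_unassoc (A Y B : ob C) : hom C (prod (prod A Y) B) (prod A (prod Y B)) :=
  pair (comp (pr1 _ _) (pr1 _ _)) (pair (comp (pr2 _ _) (pr1 _ _)) (pr2 _ _)).

Definition prod_assoc_by (X A Y B : ob C) (sigma : hom C (prod A Y) X)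
  : hom C (prod A (prod Y B)) (prod X B) :=
  comp (fprod sigma (idm B)) (prod_assoc A Y B).

Definition prod_unassoc_by (X A Y B : ob C) (tau : hom C X (prod A Y))
  : hom C (prod X B) (prod A (prod Y B)) :=
  comp (prod_unassoc A Y B) (fprod tau (idm B)).

Definition swap (A B : ob C) : hom C (prod A B) (prod B A) := pair (pr2 A B) (pr1 A B).

End ProductMorphisms.

Ltac hom_norm_with tac := repeat first
  [ rewrite comp_idl | rewrite comp_idr | rewrite pair_pr1 | rewrite pair_pr2
  | rewrite pair_comp | rewrite <- comp_assoc | rewrite pair_pr | tac ].

Ltac prod_eq_with tac :=
  unfold prod_assoc_by, prod_unassoc_by, fprod, prod_assoc, prod_unassoc, swap; hom_norm_with tac;
  first [reflexivity | apply prod_hom_ext; prod_eq_with tac].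

Ltac prod_eq := prod_eq_with fail.

Section ProductIdentities.
Variable C : FPCat.

Lemma fprod_comp (A A' A'' B : ob C) (f : hom C A A') (f' : hom C A' A'') :
  fprod (comp f' f) (idm B) = comp (fprod f' (idm B)) (fprod f (idm B)).
Proof. prod_eq. Qed.

Lemma fprod_id (A B : ob C) : fprod (idm A) (idm B) = idm (prod A B).
Proof. prod_eq. Qed.

Lemma prod_assoc_unassoc (A Y B : ob C) :
  comp (prod_assoc C A Y B) (prod_unassoc C A Y B) = idm _.
Proof. prod_eq. Qed.

Lemma prod_assoc_by_unassoc (X A Y B : ob C)
  (sigma : hom C (prod A Y) X) (tau : hom C X (prod A Y)) :
  comp sigma tau = idm X ->
  comp (prod_assoc_by C X A Y B sigma) (prod_unassoc_by C X A Y B tau) = idm (prod X B).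
Proof.
  intros sigma_tau; unfold prod_assoc_by, prod_unassoc_by.
  rewrite <- comp_assoc, (comp_assoc _ _ _ _ _ (fprod tau (idm B))), prod_assoc_unassoc, comp_idl.
  rewrite <- fprod_comp, sigma_tau, fprod_id; reflexivity.
Qed.

End ProductIdentities.

Section Triples.
Variables (C : FPCat) (P : DocData C).
Hypothesis HP : is_doctrine C P.

Lemma fle_refl A (x : fib P A) : fle P x x.
Proof. apply HP. Qed.

Lemma fle_trans A (x y z : fib P A) : fle P x y -> fle P y z -> fle P x z.
Proof. apply HP. Qed.

Lemma reidx_mono A B (f : hom C A B) (x y : fib P B) : fle P x y -> fle P (reidx P f x) (reidx P f y).
Proof. apply HP. Qed.

Lemma reidx_id A (x : fib P A) : reidx P (idm A) x = x.
Proof. apply HP. Qed.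

Lemma reidx_comp A B D (f : hom C A B) (g : hom C B D) (x : fib P D) :
  reidx P (comp g f) x = reidx P f (reidx P g x).
Proof. apply HP. Qed.

Lemma fle_eq_trans A (x y z : fib P A) : x = y -> fle P y z -> fle P x z.
Proof. intros ->; exact id. Qed.

Ltac reidx_congr_with tac := repeat rewrite <- reidx_comp; f_equal; prod_eq_with tac.
Ltac fle_via_with y tac := apply (fle_eq_trans _ _ y); [reidx_congr_with tac |].
Tactic Notation "fle_via" constr(y) := fle_via_with y fail.

Lemma tri_le_preorder A : PreOrder (tri_le C P A).
Proof.
  split.
  - intros [B a]; exists (pr2 A B); simpl.
    rewrite pair_pr, reidx_id; apply fle_refl.
  - intros [B a] [D b] [E c] [g1 H1] [g2 H2]; simpl in *.
    exists (comp g1 (pair (pr1 A E) g2)); simpl.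
    fle_via (reidx P (pair (pr1 A E) g2) (reidx P (pair (pr1 A D) g1) a)).
    eapply fle_trans; [apply reidx_mono, H1 | exact H2].
Qed.

Lemma tri_reidx_mono A A' (f : hom C A A') :
  Proper (tri_le C P A' ==> tri_le C P A) (tri_reidx C P A A' f).
Proof.
  intros [B a] [D b] [g H]; simpl in *.
  exists (comp g (fprod f (idm D))); simpl.
  fle_via (reidx P (fprod f (idm D)) (reidx P (pair (pr1 A' D) g) a)).
  apply reidx_mono, H.
Qed.

Lemma tri_reidx_id A (t : tri C P A) : tri_reidx C P A A (idm A) t = t.
Proof. destruct t as [B a]; unfold tri_reidx; simpl; rewrite fprod_id, reidx_id; reflexivity. Qed.

Lemma tri_reidx_comp A B D (f : hom C A B) (g : hom C B D) (t : tri C P D) :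
  tri_reidx C P A D (comp g f) t = tri_reidx C P A B f (tri_reidx C P B D g t).
Proof. destruct t as [E a]; unfold tri_reidx; simpl; rewrite fprod_comp, reidx_comp; reflexivity. Qed.

Definition tri_all (X A Y : ob C) (sigma : hom C (prod A Y) X) (u : tri C P X) : tri C P A :=
  existT _ (prod Y (projT1 u))
    (reidx P (prod_assoc_by C X A Y _ sigma) (projT2 u)).

Lemma tri_all_mono X A Y (sigma : hom C (prod A Y) X) :
  Proper (tri_le C P X ==> tri_le C P A) (tri_all X A Y sigma).
Proof.
  intros [B b] [B' b'] [g H]; unfold tri_all; simpl in *.
  exists (pair (comp (pr1 Y B') (pr2 A _)) (comp g (prod_assoc_by C X A Y B' sigma))); simpl.
  fle_via (reidx P (prod_assoc_by C X A Y B' sigma) (reidx P (pair (pr1 X B') g) b)).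
  apply reidx_mono, H.
Qed.

Lemma tri_all_reidx X X' A A' Y (sigma : hom C (prod A Y) X) (sigma' : hom C (prod A' Y) X')
  (f : hom C A' A) (f' : hom C X' X) :
  comp f' sigma' = comp sigma (fprod f (idm Y)) ->
  forall u, tri_all X' A' Y sigma' (tri_reidx C P X' X f' u)
          = tri_reidx C P A' A f (tri_all X A Y sigma u).
Proof.
  intros Hsq [B b]; unfold tri_all, tri_reidx; simpl.
  rewrite <- !reidx_comp; f_equal; f_equal; unfold prod_assoc_by.
  rewrite comp_assoc, <- fprod_comp, Hsq, fprod_comp, <- !comp_assoc; f_equal.
  prod_eq.
Qed.

Section Adjunction.
Variables (X A Y : ob C) (p : hom C X A).
Variables (sigma : hom C (prod A Y) X) (tau : hom C X (prod A Y)).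
Hypotheses (p_sigma : comp p sigma = pr1 A Y) (sigma_tau : comp sigma tau = idm X).

Lemma p_sigma_comp W (k : hom C W (prod A Y)) : comp p (comp sigma k) = comp (pr1 A Y) k.
Proof. rewrite comp_assoc, p_sigma; reflexivity. Qed.

Lemma pr1_tau_comp W (k : hom C W X) : comp (pr1 A Y) (comp tau k) = comp p k.
Proof.
  rewrite <- p_sigma, <- comp_assoc, (comp_assoc _ _ _ _ _ k tau sigma), sigma_tau, comp_idl.
  reflexivity.
Qed.

Ltac split_eq := prod_eq_with ltac:(first [rewrite p_sigma_comp | rewrite pr1_tau_comp]).

Lemma tri_all_adjoint t u :
  tri_le C P X (tri_reidx C P X A p t) u <-> tri_le C P A t (tri_all X A Y sigma u).
Proof.
  destruct t as [D d], u as [B b]; unfold tri_le, tri_reidx, tri_all; simpl.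
  split; intros [g H].
  - exists (comp g (prod_assoc_by C X A Y B sigma)).
    fle_via_with (reidx P (prod_assoc_by C X A Y B sigma)
                    (reidx P (pair (pr1 X B) g) (reidx P (fprod p (idm D)) d))) split_eq.
    apply reidx_mono, H.
  - exists (comp g (prod_unassoc_by C X A Y B tau)).
    fle_via_with (reidx P (prod_unassoc_by C X A Y B tau)
                    (reidx P (pair (pr1 A (prod Y B)) g) d)) split_eq.
    eapply fle_trans; [apply reidx_mono, H |].
    rewrite <- reidx_comp, prod_assoc_by_unassoc, reidx_id by exact sigma_tau.
    apply fle_refl.
Qed.

End Adjunction.
End Triples.

Section Completion.
Variables (C : FPCat) (P : DocData C).
Hypothesis HP : is_doctrine C P.

Lemma Pun_doctrine : is_doctrine C (Pun P).
Proof.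
  pose proof (tri_le_preorder C P HP) as pre.
  split; [|split; [|split; [|split; [|split]]]]; cbn.
  - intros A; apply (refl_le_preorder (pre A)).
  - intros A; apply (refl_le_preorder (pre A)).
  - intros A; apply refl_le_antisym, pre.
  - intros A B f; apply (refl_map_mono (pre A)), tri_reidx_mono, HP.
  - intros A; apply refl_map_id; intros; apply tri_reidx_id, HP.
  - intros A B D f g; apply refl_map_comp;
      [apply pre .. | apply tri_reidx_mono, HP | apply tri_reidx_comp, HP].
Qed.

Definition Pun_all (X A Y : ob C) (sigma : hom C (prod A Y) X) : fib (Pun P) X -> fib (Pun P) A :=
  refl_map (tri_le C P X) (tri_le C P A) (tri_all C P X A Y sigma).

Lemma Pun_all_adjoint X A Y (p : hom C X A) (sigma : hom C (prod A Y) X) (tau : hom C X (prod A Y)) :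
  comp p sigma = pr1 A Y -> comp sigma tau = idm X ->
  forall S T, fle (Pun P) (reidx (Pun P) p S) T <-> fle (Pun P) S (Pun_all X A Y sigma T).
Proof.
  intros p_sigma sigma_tau; apply refl_map_adjoint; try apply tri_le_preorder, HP.
  intros; apply tri_all_adjoint with tau; assumption.
Qed.

Lemma Pun_all_reidx X X' A A' Y (sigma : hom C (prod A Y) X) (sigma' : hom C (prod A' Y) X')
  (f : hom C A' A) (f' : hom C X' X) :
  comp f' sigma' = comp sigma (fprod f (idm Y)) ->
  forall S, Pun_all X' A' Y sigma' (reidx (Pun P) f' S) = reidx (Pun P) f (Pun_all X A Y sigma S).
Proof.
  intros Hsq S; apply refl_map_square; try apply tri_le_preorder, HP.
  - apply tri_all_mono, HP.
  - apply tri_reidx_mono, HP.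
  - intros; apply tri_all_reidx; [exact HP | exact Hsq].
Qed.

End Completion.

Theorem theorem2 (C : FPCat) (P : DocData C) :
  slat_doctrine C P -> is_universal C (Pun P).
Proof.
  intros HP; split; [exact (Pun_doctrine C P HP)|].
  exists (fun A1 A2 => Pun_all C P (prod A1 A2) A1 A2 (idm _)),
         (fun A1 A2 => Pun_all C P (prod A1 A2) A2 A1 (swap C A2 A1)).
  split; [|split; [|split]]; intros.
  - apply Pun_all_adjoint with (tau := idm _); [exact HP | prod_eq ..].
  - apply Pun_all_adjoint with (tau := swap C A1 A2); [exact HP | prod_eq ..].
  - apply Pun_all_reidx; [exact HP | prod_eq].
  - apply Pun_all_reidx; [exact HP | prod_eq].
Qed.
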